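(* Let $A$ be a nonempty set of positive integers and let $n$ be a positive integer. Then (a) $\displaystyle nN^p_A(n)=\sum_{k=1}^{n-1}N^p_A(k)\sigma_A(n-k)+\sum_{t=1}^{n}t\,\tau_A(t)\,p_A(n-t)$; (b) $\displaystyle nN^q_A(n)=\sum_{k=1}^{n-1}N^q_A(k)\sigma^s_A(n-k)+\sum_{t=1}^{n}t\,\tau^s_A(t)\,q_A(n-t)$.
   Context: For a set $A$ of positive integers: $N^p_A(n)$ (resp. $N^q_A(n)$) is the total number of parts, summed over all partitions (resp. partitions into pairwise distinct parts) of $n$ with parts in $A$; $p_A(m)$ (resp. $q_A(m)$) is the number of partitions (resp. partitions into distinct parts) of $m$ with parts in $A$, with $p_A(0)=q_A(0)=1$. $\tau_A(n)=\sum_{a\in A,\,a\mid n}1$, $\tau^s_A(n)=\sum_{a\in A,\,a\mid n}(-1)^{n/a-1}$, $\sigma_A(n)=\sum_{a\in A,\,a\mid n}a$, $\sigma^s_A(n)=\sum_{a\in A,\,a\mid n}(-1)^{n/a-1}a$. *)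

From mathcomp Require Import all_boot all_order all_algebra.
Set Implicit Arguments. Unset Strict Implicit. Unset Printing Implicit Defensive.
Import GRing.Theory Num.Theory.

(* A partition of m (with parts <= m) is encoded by its multiplicity function
   f : 'I_m -> 'I_m.+1, where f i is the multiplicity of the part i.+1. *)

Definition mults (m : nat) := {ffun 'I_m -> 'I_m.+1}.

Definition is_partA (A : pred nat) {m : nat} (f : mults m) : bool :=
  ((\sum_(i < m) i.+1 * f i)%N == m) && [forall i, (0 < f i)%N ==> A i.+1].

Definition is_dpartA (A : pred nat) {m : nat} (f : mults m) : bool :=
  is_partA A f && [forall i, (f i <= 1)%N].

Definition nparts {m : nat} (f : mults m) : nat := (\sum_(i < m) f i)%N.

Definition pA (A : pred nat) (m : nat) : nat := #|[set f : mults m | is_partA A f]|.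
Definition qA (A : pred nat) (m : nat) : nat := #|[set f : mults m | is_dpartA A f]|.

Definition NpA (A : pred nat) (n : nat) : nat :=
  (\sum_(f : mults n | is_partA A f) nparts f)%N.
Definition NqA (A : pred nat) (n : nat) : nat :=
  (\sum_(f : mults n | is_dpartA A f) nparts f)%N.

(* divisor functions restricted to A (divisors of n lie in [1, n] for n > 0) *)
Definition tauA (A : pred nat) (n : nat) : nat :=
  (\sum_(1 <= a < n.+1 | A a && (dvdn a n)) 1)%N.
Definition sigmaA (A : pred nat) (n : nat) : nat :=
  (\sum_(1 <= a < n.+1 | A a && (dvdn a n)) a)%N.
Definition tausA (A : pred nat) (n : nat) : int :=
  (\sum_(1 <= a < n.+1 | A a && (dvdn a n)) (-1) ^+ (n %/ a).-1)%R.
Definition sigmasA (A : pred nat) (n : nat) : int :=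
  (\sum_(1 <= a < n.+1 | A a && (dvdn a n)) (-1) ^+ (n %/ a).-1 * a%:Z)%R.

(* Weighting each partition f of n by n = \sum_a a m_a(f) gives
   n N(n) = \sum_a a \sum_f m_a(f) #f, where #f is the number of parts.
   For unrestricted partitions, m_a(f) #f = \sum_(1 <= j <= m_a(f)) #f, and
   deleting j copies of a maps the partitions of n with m_a >= j bijectively
   onto the partitions of n - ja, removing j parts; hence
   \sum_f m_a(f) #f = \sum_j (N(n - ja) + j p(n - ja)).
   For distinct parts, adding a to the partitions of m that avoid it shows that
   the contribution x(m) of the partitions containing a satisfies
   x(m + a) + x(m) = y(m); as x vanishes below a, this forces
   x(m) = \sum_j (-1)^(j-1) y(m - ja).
   Grouping the pairs (a, j) according to t = ja turns both expansions into the
   divisor convolutions of the statement. *)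

From mathcomp Require Import all_boot all_order all_algebra ring zify.
Import GRing.Theory.

Lemma sum_nat_le_const c N x : c <= N -> \sum_(1 <= j < N.+1 | j <= c) x = c * x.
Proof.
move=> cN; have -> : c * x = \sum_(1 <= j < c.+1) x by rewrite sum_nat_const_nat subn1.
by rewrite [RHS](big_nat_widen _ _ N.+1) //; apply: eq_bigl => j; rewrite ltnS.
Qed.

Lemma big_ord_succ (R : Type) (idx : R) (op : R -> R -> R) n (P : pred nat) (F : nat -> R) :
  \big[op/idx]_(i < n | P i.+1) F i.+1 = \big[op/idx]_(1 <= a < n.+1 | P a) F a.
Proof. by rewrite big_add1 /= big_mkord. Qed.

Lemma big_dvdn_nat (R : Type) (idx : R) (op : Monoid.law idx) (F : nat -> R) a n : 0 < a ->
  \big[op/idx]_(1 <= s < n.+1 | a %| s) F s = \big[op/idx]_(1 <= j < (n %/ a).+1) F (a * j).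
Proof.
move=> a_gt0; elim: n => [|n IH]; first by rewrite div0n !big_geq.
rewrite big_mkcond big_nat_recr //= -big_mkcond IH.
case: ifP => [dvd_a | ndvd_a]; last by rewrite Monoid.mulm1 divnS // ndvd_a.
have e : n.+1 %/ a = (n %/ a).+1 by rewrite divnS // dvd_a.
by rewrite e [RHS]big_nat_recr //= -e mulnC divnK.
Qed.

Section DivisorSums.

Local Open Scope ring_scope.

Lemma sum_pairs_dvdn {R : nmodType} (P : pred nat) (G : nat -> nat -> R) n :
  \sum_(1 <= a < n.+1 | P a) \sum_(1 <= j < (n %/ a)%N.+1) G a j =
  \sum_(1 <= s < n.+1) \sum_(1 <= a < s.+1 | P a && (a %| s)%N) G a (s %/ a)%N.
Proof.
transitivity (\sum_(1 <= a < n.+1 | P a) \sum_(1 <= s < n.+1 | (a %| s)%N) G a (s %/ a)%N).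
  rewrite [LHS]big_nat_cond [RHS]big_nat_cond.
  apply: eq_bigr => a /andP[/andP[a_gt0 _] _]; rewrite big_dvdn_nat //.
  by apply: eq_bigr => j _; rewrite mulKn.
rewrite (exchange_big_dep_nat xpredT) //=; apply: eq_big_nat => s /andP[s_gt0 sn].
rewrite [RHS](big_nat_widen _ _ n.+1) //; apply: eq_bigl => a.
by case: (boolP (a %| s)%N) => [/(dvdn_leq s_gt0) le_as | _];
  rewrite ?andbF ?andbT ?ltnS ?le_as ?andbT.
Qed.

Lemma divisor_convolution {R : comPzSemiRingType} (A : pred nat) (c N P : nat -> R) n :
  N 0%N = 0 ->
  \sum_(1 <= a < n.+1 | A a) a%:R *
    \sum_(1 <= j < (n %/ a)%N.+1) c j * (N (n - a * j)%N + j%:R * P (n - a * j)%N) =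
  \sum_(1 <= k < n) N k *
    \sum_(1 <= a < (n - k)%N.+1 | A a && (a %| n - k)%N) c ((n - k) %/ a)%N * a%:R
  + \sum_(1 <= t < n.+1) t%:R *
    (\sum_(1 <= a < t.+1 | A a && (a %| t)%N) c (t %/ a)%N) * P (n - t)%N.
Proof.
move=> N0; case: (posnP n) => [-> | n_gt0]; first by rewrite !big_geq ?addr0.
transitivity (\sum_(1 <= a < n.+1 | A a) \sum_(1 <= j < (n %/ a)%N.+1) c j * a%:R * N (n - a * j)%N
  + \sum_(1 <= a < n.+1 | A a) \sum_(1 <= j < (n %/ a)%N.+1) (a * j)%:R * c j * P (n - a * j)%N).
  rewrite -big_split; apply: eq_bigr => a _; rewrite mulr_sumr -big_split.
  by apply: eq_bigr => j _ /=; rewrite natrM; ring.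
rewrite !sum_pairs_dvdn; congr (_ + _).
  rewrite (eq_bigr (fun s => N (n - s)%N *
      \sum_(1 <= a < s.+1 | A a && (a %| s)%N) c (s %/ a)%N * a%:R)) => [|s _]; last first.
    by rewrite mulr_sumr; apply: eq_bigr => a /andP[_ dvd]; rewrite mulnC divnK // mulrC.
  rewrite big_nat_recr //= subnn N0 mul0r addr0 big_nat_rev /=.
  by apply: eq_big_nat => k /andP[_ kn]; rewrite add1n subSS subKn // ltnW.
apply: eq_bigr => s _; rewrite mulr_sumr mulr_suml.
by apply: eq_bigr => a /andP[_ dvd]; rewrite mulnC divnK.
Qed.

End DivisorSums.

Section AlternatingSum.

Local Open Scope ring_scope.

Context {R : pzRingType}.
Variable a : nat.
Hypothesis a_gt0 : (0 < a)%N.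

Definition alt_sum (y : nat -> nat -> R) (m : nat) : R :=
  \sum_(1 <= j < (m %/ a).+1) (-1) ^+ j.-1 * y j (m - a * j)%N.

Lemma alt_sum_small y m : (m < a)%N -> alt_sum y m = 0.
Proof. by move=> ma; rewrite /alt_sum divn_small // big_geq. Qed.

Lemma alt_sumD y z m :
  alt_sum (fun j k => y j k + z j k) m = alt_sum y m + alt_sum z m.
Proof. by rewrite /alt_sum -big_split; apply: eq_bigr => j _; rewrite mulrDr. Qed.

Lemma alt_sum_shift y m : alt_sum y (m + a)%N = y 1 m - alt_sum (fun j => y j.+1) m.
Proof.
rewrite /alt_sum -{1}(mul1n a) addnC divnMDl // big_nat_recl //= muln1 addnK expr0 mul1r.
rewrite -sumrN; congr (_ + _); apply: eq_big_nat => j /andP[j1 _].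
rewrite mulnS addnC subnDl; case: j j1 => // j _.
by rewrite exprS mulN1r mulNr.
Qed.

Lemma alt_sum_rec (x y : nat -> R) n :
  (forall m, (m < a)%N -> x m = 0) ->
  (forall m, (m + a <= n)%N -> x (m + a)%N = y m - x m) ->
  forall m, (m <= n)%N -> x m = alt_sum (fun=> y) m.
Proof.
move=> x_small x_rec; elim/ltn_ind=> m IH mn; case: (ltnP m a) => [ma | am].
  by rewrite x_small // alt_sum_small.
have ma : (m - a < m)%N by rewrite -subn_gt0 subKn.
rewrite -(subnK am) alt_sum_shift x_rec ?subnK // IH //; exact: leq_trans (ltnW ma) mn.
Qed.

End AlternatingSum.

Definition weight {k} (f : mults k) : nat := \sum_(i < k) i.+1 * f i.
Definition supported_in (A : pred nat) {k} (f : mults k) : bool :=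
  [forall i, (0 < f i) ==> A i.+1].
Definition distinct {k} (f : mults k) : bool := [forall i, f i <= 1].
Definition is_part (A : pred nat) (m : nat) {k} (f : mults k) : bool :=
  (weight f == m) && supported_in A f.

(* [multf f x] is the multiplicity of the part [x.+1], extended by 0 beyond
   ['I_k]; it identifies a partition of [m] with its zero-padded copy in
   [mults n] for every [n >= m]. *)
Definition multf {k} (f : mults k) (x : nat) : nat :=
  if (insub x : option 'I_k) is Some i then val (f i) else 0.

Section Multiplicities.

Context {k : nat}.
Implicit Types (f g : mults k) (A : pred nat).

Lemma multf_ord f (i : 'I_k) : multf f i = f i.
Proof. by rewrite /multf valK. Qed.

Lemma multf_out f x : k <= x -> multf f x = 0.
Proof. by move=> h; rewrite /multf insubN // -leqNgt. Qed.

Lemma multf_le f x : multf f x <= k.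
Proof. by rewrite /multf; case: insubP => // i _ _; rewrite -ltnS ltn_ord. Qed.

Lemma multf_inj f g : multf f =1 multf g -> f = g.
Proof. by move=> fg; apply/ffunP => i; apply/val_inj; have := fg i; rewrite !multf_ord. Qed.

Lemma big_ord_multf f K (F : nat -> nat -> nat) : k <= K -> (forall x, F x 0 = 0) ->
  \sum_(i < k) F i (f i) = \sum_(i < K) F i (multf f i).
Proof.
move=> kK F0; rewrite (eq_bigr (fun i : 'I_k => F i (multf f i))) => [|i _];
  last by rewrite multf_ord.
rewrite (@big_ord_widen _ _ _ k K (fun i => F i (multf f i))) // big_mkcond /=.
by apply: eq_bigr => i _; case: ltnP => // /multf_out ->.
Qed.

Lemma weight_multf f K : k <= K -> weight f = \sum_(i < K) i.+1 * multf f i.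
Proof.
move=> kK; rewrite /weight.
by apply: (big_ord_multf f K (fun x y => x.+1 * y)) => // x; rewrite muln0.
Qed.

Lemma nparts_multf f K : k <= K -> nparts f = \sum_(i < K) multf f i.
Proof. by move=> kK; rewrite /nparts; apply: (big_ord_multf f K (fun _ y => y)). Qed.

Lemma forall_multf (P : nat -> nat -> bool) f : (forall x, P x 0) ->
  reflect (forall x, P x (multf f x)) [forall i : 'I_k, P i (f i)].
Proof.
move=> P0; apply: (iffP forallP) => H x; last by rewrite -multf_ord.
by case: (ltnP x k) => [xk | /multf_out ->]; [have := H (Ordinal xk); rewrite -multf_ord|].
Qed.

Lemma mul_multf_le_weight f x : x.+1 * multf f x <= weight f.
Proof.
case: (ltnP x k) => [xk | /multf_out ->]; last by rewrite muln0.
by rewrite (weight_multf f k (leqnn k)) (bigD1 (Ordinal xk)) //= leq_addr.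
Qed.

Lemma mul_le_weight f (i : 'I_k) : i.+1 * f i <= weight f.
Proof. by rewrite -multf_ord mul_multf_le_weight. Qed.

Lemma multf_le_weight f x : multf f x <= weight f.
Proof. exact: leq_trans (leq_pmull _ _) (mul_multf_le_weight f x). Qed.

Lemma multf_weight_out f x : weight f <= x -> multf f x = 0.
Proof. by move=> wx; have := mul_multf_le_weight f x; nia. Qed.

End Multiplicities.

Lemma supported_in_mult {A : pred nat} {k} {f : mults k} {i : 'I_k} :
  supported_in A f -> ~~ A i.+1 -> f i = 0 :> nat.
Proof.
move=> /forallP/(_ i)/implyP sA nA; apply/eqP; apply: contraNT nA.
by rewrite -lt0n; exact: sA.
Qed.

Lemma mul_weight_sum n (C : pred (mults n)) (F : mults n -> nat) :
  (forall f, C f -> weight f = n) ->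
  n * \sum_(f | C f) F f = \sum_(i < n) i.+1 * \sum_(f | C f) f i * F f.
Proof.
move=> wC; rewrite big_distrr.
rewrite [RHS](eq_bigr (fun i : 'I_n => \sum_(f | C f) i.+1 * (f i * F f))) => [|i _];
  last by rewrite big_distrr.
rewrite exchange_big /=; apply: eq_bigr => f /wC wf.
have -> : n * F f = weight f * F f by rewrite wf.
by rewrite /weight big_distrl; apply: eq_bigr => i _; rewrite mulnA.
Qed.

Section SameMultiplicities.

Context {k l : nat} {f : mults k} {g : mults l}.
Hypothesis fg : multf f =1 multf g.

Lemma weight_eq_multf : weight f = weight g.
Proof.
rewrite (weight_multf f (k + l)) ?leq_addr // (weight_multf g (k + l)) ?leq_addl //.
by apply: eq_bigr => i _; rewrite fg.
Qed.

Lemma nparts_eq_multf : nparts f = nparts g.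
Proof.
rewrite (nparts_multf f (k + l)) ?leq_addr // (nparts_multf g (k + l)) ?leq_addl //.
by apply: eq_bigr => i _; rewrite fg.
Qed.

Lemma supported_eq_multf A : supported_in A f = supported_in A g.
Proof.
pose P x y := (0 < y) ==> A x.+1.
by apply/(forall_multf P f (fun _ => erefl))/(forall_multf P g (fun _ => erefl)) => H x;
  [rewrite -fg | rewrite fg].
Qed.

Lemma distinct_eq_multf : distinct f = distinct g.
Proof.
pose P (x y : nat) := y <= 1.
by apply/(forall_multf P f (fun _ => erefl))/(forall_multf P g (fun _ => erefl)) => H x;
  [rewrite -fg | rewrite fg].
Qed.

End SameMultiplicities.

Definition resize {k l} (f : mults k) : mults l := [ffun i : 'I_l => inord (multf f i)].

Lemma multf_resize k l (f : mults k) : (forall x, multf f x <= l) ->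
  (forall x, l <= x -> multf f x = 0) -> multf (resize f : mults l) =1 multf f.
Proof.
move=> le_l out_l x; case: (ltnP x l) => [xl | /[dup] /out_l -> /multf_out //].
by rewrite -[x]/(val (Ordinal xl)) multf_ord ffunE inordK // ltnS.
Qed.

Lemma sum_parts_resize A d m n (F : nat -> nat) : m <= n ->
  \sum_(g : mults m | is_part A m g && (d ==> distinct g)) F (nparts g) =
  \sum_(f : mults n | is_part A m f && (d ==> distinct f)) F (nparts f).
Proof.
move=> mn.
have widen (g : mults m) : multf (resize g : mults n) =1 multf g.
  apply: multf_resize => x; first exact: leq_trans (multf_le g x) mn.
  by move=> nx; apply: multf_out; apply: leq_trans mn nx.
have shrink (f : mults n) : weight f <= m -> multf (resize f : mults m) =1 multf f.
  move=> wm; apply: multf_resize => x; first exact: leq_trans (multf_le_weight f x) wm.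
  by move=> mx; apply: multf_weight_out; apply: leq_trans wm mx.
symmetry; rewrite (reindex_onto (@resize m n) (@resize n m)) => [|f /andP[/andP[/eqP wf _] _]];
  last by apply: multf_inj => x; rewrite widen shrink ?wf.
apply: eq_big => [g | g _]; last by rewrite (nparts_eq_multf (widen g)).
have -> : resize (resize g : mults n) = g.
  apply: multf_inj => x; rewrite multf_resize ?widen // => y; rewrite widen;
    [exact: multf_le | exact: multf_out].
by rewrite eqxx andbT /is_part (weight_eq_multf (widen g)) (supported_eq_multf (widen g))
  (distinct_eq_multf (widen g)).
Qed.

Definition card_parts (A : pred nat) (d : bool) (n m : nat) : nat :=
  \sum_(f : mults n | is_part A m f && (d ==> distinct f)) 1.
Definition sum_nparts (A : pred nat) (d : bool) (n m : nat) : nat :=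
  \sum_(f : mults n | is_part A m f && (d ==> distinct f)) nparts f.

Section Transfer.

Variable A : pred nat.
Context {m n : nat}.
Hypothesis mn : m <= n.

Lemma pA_card_parts : pA A m = card_parts A false n m.
Proof.
apply: etrans (sum_parts_resize A false _ _ (fun=> 1) mn).
by rewrite /pA -sum1dep_card; apply: eq_bigl => f; rewrite andbT.
Qed.

Lemma qA_card_parts : qA A m = card_parts A true n m.
Proof.
apply: etrans (sum_parts_resize A true _ _ (fun=> 1) mn).
by rewrite /qA -sum1dep_card.
Qed.

Lemma NpA_sum_nparts : NpA A m = sum_nparts A false n m.
Proof.
apply: etrans (sum_parts_resize A false _ _ id mn).
by apply: eq_bigl => f; rewrite andbT.
Qed.

Lemma NqA_sum_nparts : NqA A m = sum_nparts A true n m.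
Proof. exact: sum_parts_resize A true _ _ id mn. Qed.

End Transfer.

Section AddCopies.

Context {n : nat}.
Variable i : 'I_n.
Implicit Types (f g : mults n) (A : pred nat).

(* [inord] sends out-of-range values to 0: [add_copies j g] only adds [j]
   copies of the part [i.+1] when [g i + j <= n]. *)
Definition add_copies j g : mults n :=
  [ffun x => if x == i then inord (g x + j) else g x].
Definition del_copies j f : mults n :=
  [ffun x => if x == i then inord (f x - j) else f x].

Lemma add_copies_ne j g {x} : x != i -> add_copies j g x = g x.
Proof. by move=> xi; rewrite ffunE (negbTE xi). Qed.

Lemma del_copies_ne j f {x} : x != i -> del_copies j f x = f x.
Proof. by move=> xi; rewrite ffunE (negbTE xi). Qed.

Lemma add_copies_eq {j g} : g i + j <= n -> add_copies j g i = g i + j :> nat.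
Proof. by move=> gj; rewrite ffunE eqxx inordK. Qed.

Lemma del_copies_eq j f : del_copies j f i = f i - j :> nat.
Proof. by rewrite ffunE eqxx inordK // ltnS (leq_trans (leq_subr _ _)) // -ltnS. Qed.

Lemma add_del_copies {j f} : j <= f i -> add_copies j (del_copies j f) = f.
Proof.
move=> jf; apply/ffunP => x; case: (eqVneq x i) => [-> | xi].
  by apply/val_inj => /=; rewrite add_copies_eq del_copies_eq subnK // -ltnS.
by rewrite add_copies_ne ?del_copies_ne.
Qed.

Lemma del_add_copies {j g} : g i + j <= n -> del_copies j (add_copies j g) = g.
Proof.
move=> gj; apply/ffunP => x; case: (eqVneq x i) => [-> | xi].
  by apply/val_inj => /=; rewrite del_copies_eq add_copies_eq ?addnK.
by rewrite del_copies_ne ?add_copies_ne.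
Qed.

Lemma weight_add_copies {j g} : g i + j <= n -> weight (add_copies j g) = weight g + i.+1 * j.
Proof.
move=> gj; rewrite /weight (bigD1 i) //= [in RHS](bigD1 i) //= add_copies_eq //.
rewrite (eq_bigr (fun x : 'I_n => x.+1 * g x)) => [|x /add_copies_ne -> //].
by rewrite mulnDr addnAC.
Qed.

Lemma weight_del_copies {j f} : j <= f i -> weight f = weight (del_copies j f) + i.+1 * j.
Proof.
move=> jf; rewrite -{1}(add_del_copies jf) weight_add_copies // del_copies_eq subnK //.
by rewrite -ltnS.
Qed.

Lemma nparts_add_copies {j g} : g i + j <= n -> nparts (add_copies j g) = nparts g + j.
Proof.
move=> gj; rewrite /nparts (bigD1 i) //= [in RHS](bigD1 i) //= add_copies_eq //.
rewrite (eq_bigr (fun x : 'I_n => val (g x))) => [|x /add_copies_ne -> //].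
by rewrite addnAC.
Qed.

Lemma supported_add_copies A j g : A i.+1 -> supported_in A (add_copies j g) = supported_in A g.
Proof.
move=> Ai; apply/forallP/forallP => H x; case: (eqVneq x i) => [-> | xi]; rewrite ?Ai ?implybT //.
  by rewrite -(add_copies_ne j g xi) H.
by rewrite (add_copies_ne j g xi) H.
Qed.

Lemma add_copies_bound {g j} : weight g + i.+1 * j <= n -> g i + j <= n.
Proof.
have gi := mul_le_weight g i; move=> wn.
by apply: leq_trans wn; apply: leq_add; [apply: leq_trans gi | ]; apply: leq_pmull.
Qed.

Lemma distinct_add_copies1 g :
  g i < n -> distinct (add_copies 1 g) = (g i == 0 :> nat) && distinct g.
Proof.
rewrite -addn1 => gn; apply/forallP/andP => [H | [/eqP gi0 /forallP H] x].
  have := H i; rewrite add_copies_eq // addn1 ltnS leqn0 => gi0; split=> //.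
  apply/forallP => x; case: (eqVneq x i) => [-> | xi]; first by rewrite (eqP gi0).
  by rewrite -(add_copies_ne 1 g xi).
case: (eqVneq x i) => [-> | xi]; first by rewrite add_copies_eq // gi0.
by rewrite add_copies_ne.
Qed.

Lemma big_add_copies A (Q : pred (mults n)) (F : mults n -> nat) k j :
  A i.+1 -> k + i.+1 * j <= n ->
  \sum_(f | is_part A (k + i.+1 * j) f && (j <= f i) && Q f) F f =
  \sum_(g | is_part A k g && Q (add_copies j g)) F (add_copies j g).
Proof.
move=> Ai kn; rewrite (reindex_onto (add_copies j) (del_copies j)) => [|f /andP[/andP[_ jf] _]];
  last exact: add_del_copies.
apply: eq_bigl => g; apply/idP/idP.
  case/andP=> [/andP[/andP[/andP[/eqP wf sf] jf] qf] /eqP dg].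
  rewrite qf andbT /is_part -(supported_add_copies A j g Ai) sf andbT.
  by move: wf; rewrite (weight_del_copies jf) dg => /eqP; rewrite eqn_add2r.
case/andP=> [/andP[/eqP wg sg] qg].
have gj : g i + j <= n by apply: add_copies_bound; rewrite wg.
rewrite /is_part weight_add_copies // wg eqxx supported_add_copies // sg qg.
by rewrite add_copies_eq // leq_addl del_add_copies // eqxx.
Qed.

End AddCopies.

Lemma sum_mult_nparts (A : pred nat) n (i : 'I_n) : A i.+1 ->
  \sum_(f : mults n | is_part A n f) f i * nparts f =
  \sum_(1 <= j < (n %/ i.+1).+1) (NpA A (n - i.+1 * j) + j * pA A (n - i.+1 * j)).
Proof.
move=> Ai.
rewrite (eq_bigr (fun f : mults n => \sum_(1 <= j < (n %/ i.+1).+1 | j <= f i) nparts f))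
  => [|f /andP[/eqP wf _]]; last first.
  by rewrite sum_nat_le_const // leq_divRL // mulnC (leq_trans (mul_le_weight f i)) ?wf.
rewrite (exchange_big_dep xpredT) //=; apply: eq_big_nat => j /andP[_ jn].
have ajn : i.+1 * j <= n by rewrite mulnC -leq_divRL // -ltnS.
rewrite (eq_bigl (fun f : mults n =>
    is_part A (n - i.+1 * j + i.+1 * j) f && (j <= f i) && predT f)) => [|f];
  last by rewrite subnK // andbT.
rewrite big_add_copies ?subnK // (NpA_sum_nparts A (leq_subr _ _)) (pA_card_parts A (leq_subr _ _)).
rewrite /sum_nparts /card_parts big_distrr -big_split /=.
apply: eq_bigr => g /andP[/andP[/eqP wg _] _].
by rewrite muln1 nparts_add_copies // add_copies_bound // wg subnK.
Qed.

Section DistinctParts.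

Variables (A : pred nat) (n : nat) (i : 'I_n).
Hypothesis Ai : A i.+1.

Definition sum_with_part (F : mults n -> nat) (m : nat) : nat :=
  \sum_(f : mults n | is_part A m f && distinct f && (0 < f i)) F f.

Lemma sum_with_part_small F m : m < i.+1 -> sum_with_part F m = 0.
Proof.
move=> mi; apply: big_pred0 => f; apply/negbTE/negP => /andP[/andP[/andP[/eqP wf _] _] fi].
by have := mul_le_weight f i; rewrite wf leqNgt (leq_trans mi) // leq_pmulr.
Qed.

Lemma sum_with_part_shift F {m} : m + i.+1 <= n ->
  sum_with_part F (m + i.+1) + sum_with_part (F \o add_copies i 1) m =
  \sum_(g : mults n | is_part A m g && distinct g) F (add_copies i 1 g).
Proof.
move=> mn; rewrite [RHS](bigID (fun g : mults n => 0 < g i)) [RHS]addnC; congr (_ + _).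
rewrite /sum_with_part [LHS](eq_bigl (fun f : mults n =>
    is_part A (m + i.+1 * 1) f && (1 <= f i) && distinct f)) => [|f]; last by rewrite muln1 andbAC.
rewrite big_add_copies ?muln1 //; apply: eq_bigl => g.
case pg: (is_part A m g) => //=; move: pg => /andP[/eqP wg _].
by rewrite distinct_add_copies1 -?eqn0Ngt 1?andbC // -addn1 add_copies_bound // wg muln1.
Qed.

Lemma sum_with_part_nparts_shift {m} : m + i.+1 <= n ->
  sum_with_part nparts (m + i.+1) + (sum_with_part nparts m + sum_with_part (fun=> 1) m) =
  sum_nparts A true n m + card_parts A true n m.
Proof.
move=> mn; have np g : is_part A m g -> nparts (add_copies i 1 g) = nparts g + 1.
  by move=> /andP[/eqP wg _]; rewrite nparts_add_copies // add_copies_bound // wg muln1.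
transitivity (sum_with_part nparts (m + i.+1) + sum_with_part (nparts \o add_copies i 1) m).
  congr (_ + _); rewrite /sum_with_part -big_split.
  by apply: eq_bigr => g /andP[/andP[pg _] _]; rewrite /= np.
rewrite sum_with_part_shift // /sum_nparts /card_parts -big_split.
by apply: eq_bigr => g /andP[pg _]; rewrite np.
Qed.

Local Open Scope ring_scope.

Lemma sum_with_part_count m : (m <= n)%N ->
  (sum_with_part (fun=> 1%N) m)%:Z = alt_sum i.+1 (fun _ k => (card_parts A true n k)%:Z) m.
Proof.
apply: (@alt_sum_rec _ _ (ltn0Sn i) (fun k => (sum_with_part (fun=> 1%N) k)%:Z)) => k.
  by move=> ki; rewrite sum_with_part_small.
move=> kn; have e : (sum_with_part (fun=> 1%N) (k + i.+1) + sum_with_part (fun=> 1%N) k)%N =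
  card_parts A true n k := sum_with_part_shift (fun=> 1%N) kn.
by rewrite -e PoszD addrK.
Qed.

Lemma sum_with_part_nparts m : (m <= n)%N ->
  (sum_with_part nparts m)%:Z = alt_sum i.+1 (fun j k =>
    (sum_nparts A true n k)%:Z + j%:R * (card_parts A true n k)%:Z) m.
Proof.
pose T := alt_sum i.+1 (fun j k => j%:R * (card_parts A true n k)%:Z).
move=> mn; rewrite alt_sumD.
rewrite -(@alt_sum_rec _ _ (ltn0Sn i) (fun k => (sum_with_part nparts k)%:Z - T k) _ n)
  ?subrK // => k.
  by move=> ki; rewrite sum_with_part_small // /T alt_sum_small // subrr.
move=> kn; have /(congr1 Posz) := sum_with_part_nparts_shift kn.
rewrite !PoszD => e; rewrite /T alt_sum_shift //.
have -> : alt_sum i.+1 (fun j k => j.+1%:R * (card_parts A true n k)%:Z) k =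
    T k + (sum_with_part (fun=> 1%N) k)%:Z.
  by rewrite sum_with_part_count ?(leq_trans (leq_addr _ _) kn) // -alt_sumD;
    apply: eq_bigr => j _; rewrite mulrSr mulrDl mul1r.
rewrite mul1r -/(T k); lia.
Qed.

Lemma sum_mult_nparts_distinct :
  (\sum_(f : mults n | is_part A n f && distinct f) f i * nparts f)%:Z =
  \sum_(1 <= j < (n %/ i.+1).+1) (-1) ^+ j.-1 *
    ((NqA A (n - i.+1 * j))%:Z + j%:R * (qA A (n - i.+1 * j))%:Z).
Proof.
have -> : (\sum_(f : mults n | is_part A n f && distinct f) f i * nparts f)%N =
    sum_with_part nparts n.
  rewrite (bigID (fun f : mults n => 0 < f i)%N) /= [X in (_ + X)%N]big1 ?addn0 => [|f];
    last by case/andP=> _; case: (f i : nat).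
  apply: eq_bigr => f /andP[/andP[_ /forallP/(_ i) fi1] fi0].
  have -> : f i = 1 :> nat by apply/eqP; rewrite eqn_leq fi1.
  exact: mul1n.
rewrite sum_with_part_nparts //; apply: eq_big_nat => j _.
by rewrite (NqA_sum_nparts A (leq_subr _ _)) (qA_card_parts A (leq_subr _ _)).
Qed.

End DistinctParts.

Lemma NpA0 A : NpA A 0 = 0.
Proof. by apply: big1 => f _; apply: big_ord0. Qed.

Lemma NqA0 A : NqA A 0 = 0.
Proof. by apply: big1 => f _; apply: big_ord0. Qed.

Lemma mul_NpA A n : n * NpA A n = \sum_(1 <= a < n.+1 | A a)
  a * \sum_(1 <= j < (n %/ a).+1) (NpA A (n - a * j) + j * pA A (n - a * j)).
Proof.
rewrite (mul_weight_sum n (is_part A n) nparts) => [|f /andP[/eqP //]].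
rewrite -big_ord_succ (bigID (fun i : 'I_n => A i.+1)) /= [X in _ + X]big1 ?addn0 => [|i nA].
  by apply: eq_bigr => i Ai; rewrite sum_mult_nparts.
by rewrite big1 ?muln0 // => f /andP[_ sf]; rewrite (supported_in_mult sf nA).
Qed.

Lemma mul_NqA A n : ((n * NqA A n)%:Z = \sum_(1 <= a < n.+1 | A a) a%:R *
  \sum_(1 <= j < (n %/ a).+1) (-1) ^+ j.-1 *
    ((NqA A (n - a * j))%:Z + j%:R * (qA A (n - a * j))%:Z))%R.
Proof.
rewrite (mul_weight_sum n (fun f => is_part A n f && distinct f) nparts)
  => [|f /andP[/andP[/eqP //]]].
rewrite -big_ord_succ (bigID (fun i : 'I_n => A i.+1)) /= [X in _ + X]big1 ?addn0 => [|i nA].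
  rewrite -natz natr_sum; apply: eq_bigr => i Ai.
  by rewrite natrM [X in (_ * X)%R]natz sum_mult_nparts_distinct.
by rewrite big1 ?muln0 // => f /andP[/andP[_ sf] _]; rewrite (supported_in_mult sf nA).
Qed.

Theorem theorem4 (A : pred nat) (n : nat)
  (hApos : forall a, A a -> (0 < a)%N) (hAne : exists a, A a) (hn : (0 < n)%N) :
  (n * NpA A n =
     \sum_(1 <= k < n) NpA A k * sigmaA A (n - k)
   + \sum_(1 <= t < n.+1) t * tauA A t * pA A (n - t))%N
  /\
  ((n * NqA A n)%:Z =
     \sum_(1 <= k < n) (NqA A k)%:Z * sigmasA A (n - k)
   + \sum_(1 <= t < n.+1) t%:Z * tausA A t * (qA A (n - t))%:Z)%R.
Proof.
split.
  have E := divisor_convolution A (fun=> 1%N) (NpA A) (pA A) n (NpA0 A).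
  rewrite mul_NpA; apply: (etrans (etrans _ E) _).
    apply: eq_bigr => a _; rewrite natn; congr (_ * _).
    by apply: eq_bigr => j _; rewrite natn mul1r.
  congr (_ + _); apply: eq_bigr => k _; rewrite ?natn; congr (_ * _).
  by apply: eq_bigr => a _; rewrite natn mul1r.
  have E := divisor_convolution A (fun j => (-1) ^+ j.-1 : int)%R (fun k => (NqA A k)%:Z)%R
    (fun k => (qA A k)%:Z)%R n (congr1 Posz (NqA0 A)).
  rewrite mul_NqA; apply: (etrans E).
  congr (_ + _)%R; apply: eq_bigr => k _; rewrite ?natz //; congr (_ * _)%R.
  by apply: eq_bigr => a _; rewrite natz.
Qed.
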